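(* For every integer $k \geq 2$ there is a constant $\alpha_k$ with $2k-1 < \alpha_k < 2k - \tfrac{1}{2}$ such that the number of palstars of length $2n$ over a $k$-letter alphabet is $\Theta(\alpha_k^n)$ as $n \to \infty$.
   Context: Let $\Sigma_k$ be an alphabet with $k$ letters and let $P = \{ x x^R : x \in \Sigma_k^+\}$ be the set of nonempty even-length palindromes over $\Sigma_k$ (here $x^R$ is the reversal of $x$). A palstar is an element of $P^* = \bigcup_{i\ge 0} P^i$, i.e. a (possibly empty) concatenation of nonempty even-length palindromes. *)

From HB Require Import structures.
From mathcomp Require Import all_boot all_order all_algebra.
From mathcomp Require Import boolp reals.
Set Implicit Arguments. Unset Strict Implicit. Unset Printing Implicit Defensive.

Definition even_pal (k : nat) (w : seq 'I_k) : Prop :=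
  exists x : seq 'I_k, x != [::] /\ w = x ++ rev x.

Definition palstar (k : nat) (w : seq 'I_k) : Prop :=
  exists ws : seq (seq 'I_k), (forall u, u \in ws -> even_pal u) /\ w = flatten ws.

Definition num_palstars (k m : nat) : nat :=
  #|[set t : m.-tuple 'I_k | `[< palstar (val t) >]]|.

From HB Require Import structures.
From mathcomp Require Import all_boot all_order all_algebra.
From mathcomp Require Import boolp reals.
From mathcomp Require Import classical_sets zify ring lra.
Set Implicit Arguments. Unset Strict Implicit. Unset Printing Implicit Defensive.

(* Every nonempty palstar is uniquely a prime even palindrome (one with no proper
   nonempty even-palindrome prefix) followed by a palstar, so the numbers a_n of
   palstars of length 2n satisfy the renewal equation a_n = \sum_j p_j a_(n-j),
   where p_j counts the prime even palindromes of length 2j.  A non-prime even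
   palindrome is u y u with u prime and y an even palindrome, whence
   k^j - \sum_(1 <= i <= j/2) k^(j-i) <= p_j <= k^j - k^(j-1).  These bounds put
   the root rho of \sum_j p_j x^j = 1 strictly between 1/(2k - 1/2) and
   1/(2k - 1), and the renewal equation keeps a_n rho^n between two positive
   constants; hence alpha_k = 1/rho. *)

Section Palindromes.
Variable T : eqType.
Implicit Types u v w x y z : seq T.

Definition evpal0 w := ~~ odd (size w) && (rev w == w).
Definition evpal w := (w != [::]) && evpal0 w.
Definition prime_evpal w :=
  evpal w && all (fun i => ~~ evpal0 (take i w)) (iota 1 (size w).-1).
Definition in_palcat u z :=
  evpal0 (take (size z - size u) z) && (drop (size z - size u) z == u).

Lemma evpal0_half w n : size w = n.*2 -> evpal0 w = (drop n w == rev (take n w)).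
Proof.
move=> sw; rewrite /evpal0 sw odd_double /=.
rewrite -{1 2}(cat_take_drop n w) rev_cat eqseq_cat; last first.
  by rewrite size_rev size_take size_drop sw; case: ltnP; lia.
apply/andP/eqP => [[/eqP <- _]|->]; first by rewrite revK.
by rewrite revK !eqxx.
Qed.

Lemma evpal0P w : reflect (exists x, w = x ++ rev x) (evpal0 w).
Proof.
apply: (iffP idP) => [ew|[x ->]]; last first.
  by rewrite /evpal0 size_cat size_rev addnn odd_double rev_cat revK eqxx.
have sw : size w = (size w)./2.*2 by move: ew => /andP[]; lia.
exists (take (size w)./2 w).
by rewrite -(eqP (etrans (esym (evpal0_half sw)) ew)) cat_take_drop.
Qed.

Lemma evpalP w : reflect (exists x, x != [::] /\ w = x ++ rev x) (evpal w).
Proof.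
apply: (iffP andP) => [[wn /evpal0P[x ew]]|[x [xn ew]]].
  by exists x; split=> //; move: wn; rewrite ew; case: x {ew}.
split; last by apply/evpal0P; exists x.
by rewrite ew; case: x xn {ew}.
Qed.

Lemma evpal0_sandwich u y : rev u = u -> evpal0 (u ++ y ++ u) = evpal0 y.
Proof.
move=> ru; rewrite /evpal0 !size_cat !rev_cat ru catA !eqseq_cat ?size_cat ?size_rev //.
by rewrite !eqxx andbT !oddD addbC -addbA addbb addbF.
Qed.

Lemma in_palcatP u z : reflect (exists2 y, evpal0 y & z = y ++ u) (in_palcat u z).
Proof.
apply: (iffP andP) => [[ey /eqP du]|[y ey ->]].
  by exists (take (size z - size u) z) => //; rewrite -[X in _ ++ X]du cat_take_drop.
by rewrite size_cat addnK take_size_cat // drop_size_cat.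
Qed.

Lemma prime_evpalP w :
  reflect (evpal w /\ forall i, 0 < i < size w -> ~~ evpal0 (take i w)) (prime_evpal w).
Proof.
apply: (iffP andP) => [[ew /allP nw]|[ew nw]]; split=> //.
  by move=> i ri; apply: nw; rewrite mem_iota; lia.
by apply/allP => i; rewrite mem_iota => ri; apply: nw; lia.
Qed.

Lemma prime_evpal_prefix_uniq w i j : i <= size w -> j <= size w ->
  prime_evpal (take i w) -> prime_evpal (take j w) -> i = j.
Proof.
wlog lt_ij : i j / i < j.
  move=> Hw iw jw Pi Pj; case: (ltngtP i j) => [lt|lt|//]; first exact: Hw.
  exact/esym/Hw.
move=> iw jw /prime_evpalP[/andP[ni ei] _] /prime_evpalP[_ Nj].
have i0 : 0 < i by move: ni; rewrite lt0n; apply: contraNneq => ->; rewrite take0.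
by move: (Nj i); rewrite size_takel // take_takel ?(ltnW lt_ij) // ei i0 lt_ij => /(_ isT).
Qed.

Lemma pal_suffix_of_prefix v u : rev v = v -> rev u = u -> prefix u v ->
  drop (size v - size u) v = u.
Proof.
move=> rv ru /prefixP[z dv].
rewrite -[X in drop _ X]rv drop_rev subKn; last by rewrite dv size_cat leq_addr.
by rewrite dv take_size_cat.
Qed.

(* A palindromic prefix u of the palindrome v is also a suffix of v; where the two
   copies of u overlap, they share a palindromic prefix of u. *)
Lemma pal_prefix_overlap v u : rev v = v -> rev u = u -> prefix u v ->
  size v <= (size u).*2 ->
  rev (take ((size u).*2 - size v) u) = take ((size u).*2 - size v) u.
Proof.
move=> rv ru pu le_vu; have := pal_suffix_of_prefix rv ru pu.
case/prefixP: pu le_vu => z ->; rewrite size_cat addKn drop_cat => le_zu du.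
have {}du : drop (size z) u ++ z = u.
  move: du; case: ifP => // /negbT; rewrite -leqNgt => le_uz.
  have -> : size z = size u by lia.
  by rewrite subnn drop0 drop_size => ->.
have -> : (size u).*2 - (size u + size z) = size u - size z by lia.
have tk : take (size u - size z) u = drop (size z) u.
  by rewrite -[X in take _ X]du take_size_cat // size_drop.
by rewrite [RHS]tk -[in RHS]ru drop_rev.
Qed.

Lemma prime_evpal_prefix_short v u : evpal0 v -> prime_evpal u -> prefix u v ->
  size u < size v -> (size u).*2 <= size v.
Proof.
move=> /andP[odd_v /eqP rv] /prime_evpalP[/andP[_ /andP[odd_u /eqP ru]] nu] pu lt_uv.
rewrite leqNgt; apply/negP => lt_vu.
have := pal_prefix_overlap rv ru pu (ltnW lt_vu); set m := _ - _ => rm.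
have : 0 < m < size u by apply/andP; rewrite /m; lia.
move/nu/negP; apply; rewrite /evpal0 rm eqxx andbT size_takel /m; last by lia.
by move: odd_u odd_v; lia.
Qed.

Lemma pal_prefix_sandwich v u : evpal0 v -> evpal0 u -> prefix u v ->
  (size u).*2 <= size v -> exists2 y, evpal0 y & v = u ++ y ++ u.
Proof.
move=> ev eu pu le_uv; have rv := eqP (proj2 (andP ev)); have ru := eqP (proj2 (andP eu)).
set y := take (size v - (size u).*2) (drop (size u) v).
have tk : take (size u) v = u by apply/eqP; rewrite -prefixE.
have dv : v = u ++ y ++ u.
  rewrite -{1}[v](cat_take_drop (size u)) tk; congr (_ ++ _).
  rewrite -[X in _ ++ X](pal_suffix_of_prefix rv ru pu).
  rewrite -{1}(cat_take_drop (size v - (size u).*2) (drop (size u) v)) drop_drop.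
  by have -> : size v - (size u).*2 + size u = size v - size u by lia.
by exists y; rewrite // -(evpal0_sandwich y ru) -dv.
Qed.

Lemma nonprime_evpal_split v : evpal v -> ~~ prime_evpal v ->
  exists u y, [/\ prime_evpal u, evpal0 y & v = u ++ y ++ u].
Proof.
move=> ev npv; have /andP[_ ev0] := ev.
have : exists l, (0 < l < size v) && evpal0 (take l v).
  move: npv; rewrite /prime_evpal ev /= => /allPn[i]; rewrite mem_iota negbK => ri ei.
  by exists i; rewrite ei andbT; apply/andP; lia.
case/ex_minnP => l /andP[rl el] minl; set u := take l v.
have su : size u = l by rewrite size_takel //; lia.
have Pu : prime_evpal u.
  apply/prime_evpalP; split; first by rewrite /evpal el -size_eq0 su; lia.
  move=> i; rewrite su => /andP[i0 il]; rewrite /u take_takel ?(ltnW il) //.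
  apply/negP => ei; suff : l <= i by lia.
  by apply: minl; rewrite ei andbT; apply/andP; lia.
have pu : prefix u v := prefix_take _ _.
have [|y ey dv] := pal_prefix_sandwich ev0 el pu.
  by apply: prime_evpal_prefix_short => //; rewrite su; lia.
by exists u, y.
Qed.

Lemma sandwich_nonprime u y : evpal u -> evpal0 y ->
  evpal (u ++ y ++ u) && ~~ prime_evpal (u ++ y ++ u).
Proof.
move=> /andP[un eu] ey; have ru := eqP (proj2 (andP eu)).
have ev : evpal (u ++ y ++ u).
  by rewrite /evpal evpal0_sandwich // ey andbT; case: u un {eu ru}.
rewrite ev /prime_evpal ev /=; apply/allPn; exists (size u).
  by rewrite mem_iota !size_cat; move: un; rewrite -size_eq0; lia.
by rewrite take_size_cat // eu.
Qed.

Lemma sandwich_take_drop v i :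
  prime_evpal (take i v) -> in_palcat (take i v) (drop i v) -> evpal v && ~~ prime_evpal v.
Proof.
move=> /prime_evpalP[pu _] /in_palcatP[y ey dv].
by rewrite -(cat_take_drop i v) dv sandwich_nonprime.
Qed.

End Palindromes.

Lemma count_sum (A : Type) (a : pred A) s : count a s = \sum_(x <- s) a x.
Proof. by elim: s => [|x s IH]; rewrite ?big_nil ?big_cons //= IH. Qed.

Lemma count_andl (A : Type) (b : bool) (a : pred A) s :
  count (fun x => b && a x) s = b * count a s.
Proof. by case: b; rewrite ?mul1n ?count_pred0. Qed.

Lemma sub_in_count (A : eqType) (a b : pred A) s :
  {in s, subpred a b} -> count a s <= count b s.
Proof.
move=> ab; rewrite -(@eq_in_count _ (predI a b)); first by apply: sub_count => x /andP[].
by move=> x xs /=; case ax: (a x); rewrite // (ab x xs ax).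
Qed.

Section CountHas.
Variables (A I : eqType) (f : I -> pred A) (s : seq I) (t : seq A).

Lemma count_has_le : count (fun w => has (f^~ w) s) t <= \sum_(i <- s) count (f i) t.
Proof.
under eq_bigr do rewrite count_sum.
rewrite exchange_big /= count_sum; apply: leq_sum => w _.
by rewrite -count_sum has_count; case: (count _ _).
Qed.

Lemma count_has_eq : uniq s ->
  (forall w i j, w \in t -> i \in s -> j \in s -> f i w -> f j w -> i = j) ->
  count (fun w => has (f^~ w) s) t = \sum_(i <- s) count (f i) t.
Proof.
move=> us f_inj; under eq_bigr do rewrite count_sum.
rewrite exchange_big /= count_sum big_seq [RHS]big_seq; apply: eq_bigr => w wt.
rewrite -count_sum has_count.
have : count (f^~ w) s <= 1.
  case: (boolP (has (f^~ w) s)) => [/hasP[i i_s fiw]|]; last first.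
    by rewrite has_count; case: (count _ _).
  rewrite -size_filter -[1%N]/(size [:: i]); apply: uniq_leq_size; first exact: filter_uniq.
  by move=> j; rewrite mem_filter inE => /andP[fjw js]; apply/eqP/(f_inj w).
by case: (count _ _) => [|[]].
Qed.

End CountHas.

Section Words.
Variable T : finType.

Fixpoint words n : seq (seq T) :=
  if n is m.+1 then [seq a :: w | a <- enum T, w <- words m] else [:: [::]].

Lemma mem_words n w : (w \in words n) = (size w == n).
Proof.
elim: n w => [|n IH] [|a w] //=.
- by apply/negbTE/allpairsP => -[[b u] [_ _]].
- rewrite eqSS -IH; apply/allpairsP/idP => [[[b u] [_ /= hu [_ ->]]]//|hw].
  by exists (a, w); rewrite mem_enum.
Qed.

Lemma size_words n : size (words n) = #|T| ^ n.
Proof. by elim: n => //= n IH; rewrite size_allpairs IH -cardT expnS. Qed.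

Lemma uniq_words n : uniq (words n).
Proof.
elim: n => //= n IH; apply: allpairs_uniq => //; first exact: enum_uniq.
by move=> [a u] [b v] _ _ /= [-> ->].
Qed.

Lemma count_words_eq n x : size x = n -> count (pred1 x) (words n) = 1.
Proof. by move=> sx; rewrite count_uniq_mem ?uniq_words // mem_words sx eqxx. Qed.

Lemma count_words_cat l m (Q : seq T -> seq T -> bool) :
  count (fun w => Q (take l w) (drop l w)) (words (l + m)) =
  \sum_(x <- words l) count (Q x) (words m).
Proof.
elim: l Q => [|l IH] Q.
  by rewrite add0n big_seq1; apply: eq_count => w; rewrite take0 drop0.
rewrite addSn /= count_sum !big_allpairs_dep /=; apply: eq_bigr => a _.
by rewrite -count_sum (IH (fun x y => Q (a :: x) y)).
Qed.

Lemma card_tuple_words m (P : pred (seq T)) :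
  #|[set t : m.-tuple T | P t]| = count P (words m).
Proof.
rewrite (@eq_card _ _ [pred t : m.-tuple T | P t]); last by move=> t; rewrite !inE.
rewrite cardE /enum_mem size_filter -enumT /= -(count_map val P).
apply/permP/uniq_perm; [by rewrite map_inj_uniq ?enum_uniq //; apply: val_inj
  | exact: uniq_words |].
move=> w; rewrite mem_words; apply/mapP/idP => [[t _ ->]|sw]; first by rewrite size_tuple.
by exists (Tuple sw); rewrite ?mem_enum.
Qed.

End Words.

(* The number of pairs (u, y) of even palindromes over an alphabet of size k with
   u nonempty and size (u ++ y ++ u) = 2j. *)
Definition sandwich_bound (k j : nat) := \sum_(1 <= i < (j./2).+1) k ^ (j - i).

Lemma sandwich_bound_rec k j : sandwich_bound k j.+2 = k ^ j.+1 + k * sandwich_bound k j.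
Proof.
rewrite /sandwich_bound /= big_nat_recl // subn1 /= big_distrr /=; congr (_ + _).
by apply: eq_big_nat => i /andP[i1 ij]; rewrite -expnS subSS; congr (_ ^ _); lia.
Qed.

Section PrimeCounts.
Variable T : finType.
Local Notation k := #|T|.
Local Notation words := (@words T).

Definition nprime j := count (@prime_evpal T) (words j.*2).
Definition nnonprime j := count (fun v => evpal v && ~~ prime_evpal v) (words j.*2).

Lemma count_evpal0 n : count (@evpal0 T) (words n.*2) = k ^ n.
Proof.
rewrite -addnn (@eq_in_count _ _ (fun w => drop n w == rev (take n w))); last first.
  by move=> w; rewrite mem_words => /eqP sw; rewrite (evpal0_half (n := n)) // sw addnn.
rewrite (count_words_cat n n (fun x y => y == rev x)) big_seq.
rewrite (eq_bigr (fun _ => 1%N)) -?big_seq ?sum1_size ?size_words // => x.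
by rewrite mem_words => /eqP sx; apply: count_words_eq; rewrite size_rev.
Qed.

Lemma count_in_palcat u m : count (in_palcat u) (words (m.*2 + size u)) = k ^ m.
Proof.
rewrite (@eq_in_count _ _ (fun z => evpal0 (take m.*2 z) && (drop m.*2 z == u))); last first.
  by move=> z; rewrite mem_words => /eqP sz; rewrite /in_palcat sz addnK.
rewrite (count_words_cat _ _ (fun x y => evpal0 x && (y == u))).
under eq_bigr do rewrite count_andl count_words_eq // muln1.
by rewrite -count_sum count_evpal0.
Qed.

Lemma count_sandwich i j : i.*2 <= j ->
  count (fun v => prime_evpal (take i.*2 v) && in_palcat (take i.*2 v) (drop i.*2 v))
    (words j.*2) = nprime i * k ^ (j - i.*2).
Proof.
move=> ij; have -> : j.*2 = i.*2 + ((j - i.*2).*2 + i.*2) by lia.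
rewrite (count_words_cat _ _ (fun x y => prime_evpal x && in_palcat x y)) big_seq.
rewrite (eq_bigr (fun x => prime_evpal x * k ^ (j - i.*2))) => [|x].
  by rewrite -big_seq -big_distrl -count_sum.
by rewrite mem_words => /eqP sx; rewrite count_andl -sx count_in_palcat.
Qed.

Lemma nprime_le j : nprime j <= k ^ j.
Proof. by rewrite -count_evpal0; apply: sub_count => w /prime_evpalP[/andP[]]. Qed.

Lemma nprime1 : nprime 1 = k.
Proof.
rewrite -[k]expn1 -count_evpal0; apply: eq_in_count => w.
by rewrite mem_words; case: w => [|a [|b []]] // _; rewrite /prime_evpal /evpal /= andbT.
Qed.

Lemma nprime_nonprime j : 0 < j -> nprime j + nnonprime j = k ^ j.
Proof.
move=> j0; rewrite -count_evpal0 -size_filter -(count_predC (@prime_evpal T)) !count_filter.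
congr (_ + _); apply: eq_in_count => w; rewrite mem_words => /eqP sw /=.
  by case pw: (prime_evpal w) => //=; case/prime_evpalP: pw => /andP[_ ->].
have wn : w != [::] by rewrite -size_eq0 sw; lia.
by rewrite /evpal wn andbC.
Qed.

Lemma nnonprime_lower j : 2 <= j -> k ^ j.-1 <= nnonprime j.
Proof.
move=> j2; have := @count_sandwich 1 j j2; rewrite nprime1 -expnS.
have -> : (j - 1.*2).+1 = j.-1 by lia.
move <-; apply: sub_in_count => v _ /andP[]; exact: sandwich_take_drop.
Qed.

Lemma nnonprime_upper j : nnonprime j <= sandwich_bound k j.
Proof.
pose sandwich i (v : seq T) := prime_evpal (take i.*2 v) && in_palcat (take i.*2 v) (drop i.*2 v).
apply: (@leq_trans (count (fun v => has (sandwich^~ v) (index_iota 1 (j./2).+1)) (words j.*2))).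
  apply: sub_in_count => v; rewrite mem_words => /eqP sv /andP[ev npv].
  have [u [y [pu ey dv]]] := nonprime_evpal_split ev npv.
  have /prime_evpalP[/andP[un /andP[odd_u _]] _] := pu.
  have su : size u = (size u)./2.*2 by lia.
  have u0 : 0 < size u by rewrite lt0n size_eq0.
  apply/hasP; exists (size u)./2.
    by rewrite mem_index_iota; move: sv; rewrite dv !size_cat; lia.
  rewrite /sandwich -su dv take_size_cat // drop_size_cat // pu.
  by apply/in_palcatP; exists y.
apply: leq_trans (count_has_le _ _ _) _.
rewrite /sandwich_bound big_seq [X in _ <= X]big_seq.
apply: leq_sum => i; rewrite mem_index_iota => /andP[i1 ij].
rewrite count_sandwich; last by move: ij; rewrite ltnS; lia.
apply: leq_trans (leq_mul (nprime_le i) (leqnn _)) _.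
by rewrite -expnD; have -> : i + (j - i.*2) = j - i by move: ij; rewrite ltnS; lia.
Qed.

Lemma nprime_upper j : 2 <= j -> nprime j + k ^ j.-1 <= k ^ j.
Proof.
by move=> j2; rewrite -(nprime_nonprime (ltnW j2)) leq_add2l nnonprime_lower.
Qed.

Lemma nprime_lower j : k ^ j <= nprime j + sandwich_bound k j + (j == 0).
Proof.
case: j => [|j]; first by rewrite /sandwich_bound big_geq.
by rewrite -(nprime_nonprime (ltn0Sn j)) addn0 leq_add2l nnonprime_upper.
Qed.

End PrimeCounts.

Section Palstars.
Variable k : nat.
Implicit Types u w : seq 'I_k.

Lemma palstar_nil : palstar ([::] : seq 'I_k).
Proof. by exists [::]. Qed.

Lemma palstar_cat_evpal0 u w : evpal0 u -> palstar w -> palstar (u ++ w).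
Proof.
case/evpal0P=> [[|a x] ->] // [ws [evs ->]].
exists ((a :: x ++ rev (a :: x)) :: ws); split=> // v; rewrite inE => /orP[/eqP ->|]; last exact: evs.
by exists (a :: x).
Qed.

Lemma palstar_prime_factor w : w != [::] ->
  palstar w <-> exists u w', [/\ prime_evpal u, palstar w' & w = u ++ w'].
Proof.
move=> wn; split=> [[[|v ws] [evs dw]]|[u [w' [/prime_evpalP[/andP[_ eu] _] pw' ->]]]];
  last exact: palstar_cat_evpal0.
  by rewrite dw in wn.
have ev : evpal v by apply/evpalP/evs; rewrite mem_head.
have pws : palstar (flatten ws) by exists ws; split=> // x xs; apply: evs; rewrite inE xs orbT.
rewrite dw /=; case: (boolP (prime_evpal v)) => [pv|npv]; first by exists v, (flatten ws).
have [u [y [pu ey ->]]] := nonprime_evpal_split ev npv.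
have /prime_evpalP[/andP[_ eu] _] := pu.
exists u, (y ++ u ++ flatten ws); rewrite -!catA; split=> //.
by apply: palstar_cat_evpal0 ey _; apply: palstar_cat_evpal0.
Qed.

Lemma num_palstarsE m : num_palstars k m = count (fun w => `[< palstar w >]) (words _ m).
Proof. exact: card_tuple_words. Qed.

Lemma num_palstars0 : num_palstars k 0 = 1.
Proof. by rewrite num_palstarsE /= asboolT //; exact: palstar_nil. Qed.

Lemma num_palstars_rec n : 0 < n ->
  num_palstars k n.*2 = \sum_(1 <= j < n.+1) nprime 'I_k j * num_palstars k (n - j).*2.
Proof.
move=> n0; rewrite !num_palstarsE.
set palb := fun w => `[< palstar w >].
pose factor j w := prime_evpal (take j.*2 w) && palb (drop j.*2 w).
rewrite (@eq_in_count _ _ (fun w => has (factor^~ w) (iota 1 n))); last first.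
  move=> w; rewrite mem_words => /eqP sw.
  have wn : w != [::] by rewrite -size_eq0 sw; lia.
  apply/asboolP/hasP => [/(palstar_prime_factor wn)[u [w' [pu pw' dw]]]|[j]].
    have /prime_evpalP[/andP[un /andP[odd_u _]] _] := pu.
    exists (size u)./2.
      rewrite mem_iota; move: un odd_u sw; rewrite dw size_cat -size_eq0 -lt0n.
      by set m := size u; lia.
    rewrite /factor (_ : (size u)./2.*2 = size u); last by move: odd_u; set m := size u; lia.
    by rewrite dw take_size_cat // drop_size_cat // pu; apply/asboolP.
  rewrite mem_iota => jn /andP[pu /asboolP pw']; apply/(palstar_prime_factor wn).
  by exists (take j.*2 w), (drop j.*2 w); rewrite cat_take_drop.
rewrite count_has_eq ?iota_uniq //; last first.
  move=> w i j; rewrite mem_words !mem_iota => /eqP sw ri rj /andP[pi _] /andP[pj _].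
  suff : i.*2 = j.*2 by lia.
  by apply: (prime_evpal_prefix_uniq (w := w)); rewrite // sw; lia.
have -> : iota 1 n = index_iota 1 n.+1 by rewrite /index_iota subn1.
rewrite big_seq [RHS]big_seq; apply: eq_bigr => j.
rewrite mem_index_iota => rj; have -> : n.*2 = j.*2 + (n - j).*2 by lia.
rewrite (count_words_cat _ _ (fun x y => prime_evpal x && palb y)).
under eq_bigr do rewrite count_andl.
by rewrite -big_distrl -count_sum num_palstarsE.
Qed.

End Palstars.

Import Order.TTheory GRing.Theory Num.Theory.
Local Open Scope ring_scope.

Section Geometric.
Variable R : realFieldType.
Implicit Types q x y : R.

Lemma geo_sum_mul q a b : (a <= b)%N ->
  (1 - q) * \sum_(a <= j < b) q ^+ j = q ^+ a - q ^+ b.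
Proof.
elim: b => [|b IH]; first by rewrite leqn0 => /eqP ->; rewrite big_geq // mulr0 subrr.
rewrite leq_eqVlt => /orP[/eqP ->|ab]; first by rewrite big_geq // mulr0 subrr.
by rewrite big_nat_recr //= mulrDr IH // exprS; ring.
Qed.

Lemma geo_sum_le q a b : 0 <= q < 1 -> \sum_(a <= j < b) q ^+ j <= q ^+ a / (1 - q).
Proof.
case/andP=> q0 q1; have d0 : 0 < 1 - q by rewrite subr_gt0.
case: (leqP a b) => ab; last first.
  by rewrite big_geq ?(ltnW ab) // divr_ge0 // ?exprn_ge0 // ltW.
rewrite ler_pdivlMr // mulrC geo_sum_mul // gerDl oppr_le0 exprn_ge0 //.
Qed.

Lemma subrXX_le x y n : 0 <= x -> x <= y -> y <= 1 -> y ^+ n - x ^+ n <= n%:R * (y - x).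
Proof.
move=> x0 xy y1; have y0 := le_trans x0 xy.
rewrite subrXX mulrC ler_wpM2r ?subr_ge0 //.
apply: (@le_trans _ _ (\sum_(i < n) (1 : R))); last by rewrite sumr_const card_ord.
apply: ler_sum => i _.
by rewrite mulr_ile1 ?exprn_ge0 ?exprn_ile1 ?(le_trans xy).
Qed.

Lemma expr_bernoulli q n : 0 <= q <= 1 -> q ^+ n * (1 + n%:R * (1 - q)) <= 1.
Proof.
case/andP=> q0 q1; elim: n => [|n IH]; first by rewrite expr0 mul0r addr0 mulr1.
have y0 : 0 <= q ^+ n := exprn_ge0 n q0.
have qy1 : q * q ^+ n <= 1 by rewrite mulr_ile1 ?exprn_ile1.
have h1 := ler_wpM2l q0 IH.
have h2 : q * q ^+ n * (1 - q) <= 1 * (1 - q) by rewrite ler_wpM2r ?subr_ge0.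
rewrite exprS -natr1; set m : R := n%:R in h1 *; set y := q ^+ n in h1 h2 qy1 *.
have -> : q * y * (1 + (m + 1) * (1 - q)) = q * (y * (1 + m * (1 - q))) + q * y * (1 - q) by ring.
lra.
Qed.

End Geometric.

Lemma exprn_lt (R : archiFieldType) (q e : R) : 0 <= q < 1 -> 0 < e -> exists N, q ^+ N < e.
Proof.
case/andP=> q0 q1 e0; set d := 1 - q.
have d0 : 0 < d by rewrite subr_gt0.
have ed0 : 0 < e * d by rewrite mulr_gt0.
have /archi_boundP : 0 <= (e * d)^-1 by rewrite invr_ge0 ltW.
set n := Num.Def.archi_bound _ => hn.
exists n; rewrite ltNge; apply/negP => en.
have hb : q ^+ n * (1 + n%:R * d) <= 1 by apply: expr_bernoulli; rewrite q0 ltW.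
have m0 : 0 <= 1 + n%:R * d by rewrite addr_ge0 // mulr_ge0 // ltW.
have h1 : e * (1 + n%:R * d) <= q ^+ n * (1 + n%:R * d) by apply: ler_wpM2r.
have : 1 < e * d * n%:R.
  by rewrite -[X in X < _](mulfV (lt0r_neq0 ed0)) ltr_pM2l.
nra.
Qed.

Section Renewal.
Variables (R : realFieldType) (c b : nat -> R).
Hypotheses (c_ge0 : forall j, 0 <= c j)
  (b_rec : forall n, (0 < n)%N -> b n = \sum_(1 <= j < n.+1) c j * b (n - j)).

Lemma renewal_le1 : b 0 <= 1 -> (forall n, \sum_(1 <= j < n.+1) c j <= 1) ->
  forall n, b n <= 1.
Proof.
move=> b01 c_le1; elim/ltn_ind => -[//|n] IH.
rewrite b_rec //; apply: le_trans (c_le1 n.+1); apply: ler_sum_nat => j /andP[j1 jn].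
by rewrite ler_piMr // IH // ltn_subrL j1.
Qed.

(* A linearised form of b n >= beta * \prod_(M <= m <= n) (1 - e m). *)
Lemma renewal_ge (M : nat) (e : nat -> R) (beta : R) : (0 < M)%N -> 0 <= beta ->
  (forall n, (n < M)%N -> beta <= b n) -> (forall n, 0 <= e n) ->
  (forall n, 1 - e n <= \sum_(1 <= j < n.+1) c j) ->
  (forall n, \sum_(M <= m < n.+1) e m <= 1) ->
  forall n, beta * (1 - \sum_(M <= m < n.+1) e m) <= b n.
Proof.
move=> M0 beta0 b_ge e_ge0 c_ge E_le1; pose E n := \sum_(M <= m < n.+1) e m.
have E_ge0 n : 0 <= E n by rewrite sumr_ge0.
have E_mono m n : (m <= n)%N -> E m <= E n.
  move=> mn; case: (leqP M m.+1) => hm; last by rewrite {1}/E big_geq ?(ltnW hm).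
  by rewrite /E [X in _ <= X](@big_cat_nat _ _ _ m.+1) //= lerDl sumr_ge0.
suff : forall n, beta * (1 - E n) <= b n by [].
elim/ltn_ind => n IH; case: (ltnP n M) => [nM|Mn].
  by rewrite /E big_geq // subr0 mulr1 b_ge.
have n0 : (0 < n)%N := leq_trans M0 Mn.
have X0 : 0 <= beta * (1 - E n.-1) by rewrite mulr_ge0 // subr_ge0; exact: E_le1.
have : (1 - e n) * (beta * (1 - E n.-1)) <= b n.
  apply: le_trans (ler_wpM2r X0 (c_ge n)) _; rewrite b_rec // mulr_suml.
  apply: ler_sum_nat => j /andP[j1 jn]; rewrite ler_wpM2l //.
  apply: le_trans (IH (n - j)%N _); last by rewrite ltn_subrL j1.
  by rewrite ler_wpM2l // lerD2l lerN2 E_mono //; lia.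
have -> : E n = E n.-1 + e n by rewrite /E -(prednK n0) big_nat_recr //= -ltnS prednK.
have : 0 <= e n * beta * E n.-1 by rewrite !mulr_ge0.
lra.
Qed.

End Renewal.

Section Growth.
Variables (R : realType) (k : nat) (p a : nat -> nat).
Hypotheses (k_ge2 : (2 <= k)%N) (p0 : p 0%N = 0%N) (p1 : p 1%N = k)
  (p_upper : forall j, (2 <= j)%N -> (p j + k ^ j.-1 <= k ^ j)%N)
  (p_lower : forall j, (k ^ j <= p j + sandwich_bound k j + (j == 0%N))%N)
  (a0 : a 0%N = 1%N)
  (a_rec : forall n, (0 < n)%N -> a n = (\sum_(1 <= j < n.+1) p j * a (n - j))%N).

Local Notation K := (k%:R : R).

Definition pgf (M : nat) (x : R) := \sum_(0 <= j < M.+1) (p j)%:R * x ^+ j.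
Definition pgf_slope (M : nat) : R := \sum_(0 <= j < M.+1) (p j)%:R * j%:R.
Definition xhi : R := (2 * K - 1)^-1.
Definition xlo : R := (2 * K - 2^-1)^-1.

Local Notation q := (K * xhi).

Lemma K_ge2 : 2 <= K.
Proof. by rewrite (ler_nat R 2 k). Qed.

Lemma xhiE : xhi * (2 * K - 1) = 1.
Proof. by rewrite mulVf //; apply/eqP => E; have := K_ge2; lra. Qed.

Lemma xhi_gt0 : 0 < xhi.
Proof. by rewrite invr_gt0; have := K_ge2; lra. Qed.

Lemma xhi_le1 : xhi <= 1.
Proof. by have := K_ge2; have := xhiE; have := xhi_gt0; nra. Qed.

Lemma q_ge0 : 0 <= q.
Proof. by have := K_ge2; have := xhi_gt0; nra. Qed.

Lemma q_lt1 : q < 1.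
Proof. by have := K_ge2; have := xhiE; have := xhi_gt0; nra. Qed.

Lemma q_ge0_lt1 : 0 <= q < 1.
Proof. by rewrite q_ge0 q_lt1. Qed.

Lemma xloE : xlo * (2 * K - 2^-1) = 1.
Proof. by rewrite mulVf //; apply/eqP => E; have := K_ge2; lra. Qed.

Lemma xlo_gt0 : 0 < xlo.
Proof. by rewrite invr_gt0; have := K_ge2; lra. Qed.

Lemma Kxlo_lt1 : K * xlo < 1.
Proof. by have := K_ge2; have := xloE; have := xlo_gt0; nra. Qed.

Lemma xlo_lt_xhi : xlo < xhi.
Proof.
have := K_ge2; have := xloE; have := xhiE; have := xlo_gt0; have := xhi_gt0; nra.
Qed.

Lemma p_le j : (p j <= k ^ j)%N.
Proof.
case: j => [|[|j]]; rewrite ?p0 ?p1 //.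
by apply: leq_trans (p_upper _) => //; apply: leq_addr.
Qed.

Lemma p_leK j : (p j)%:R <= K ^+ j.
Proof. by rewrite -natrX ler_nat p_le. Qed.

Lemma p_leK2 j : (p j.+2)%:R <= (K - 1) * K ^+ j.+1.
Proof.
have := p_upper (isT : (2 <= j.+2)%N); rewrite -(ler_nat R) natrD !natrX /=.
by rewrite mulrBl mul1r -exprS; lra.
Qed.

Lemma pgf_split M N x : (M <= N)%N ->
  pgf N x = pgf M x + \sum_(M.+1 <= j < N.+1) (p j)%:R * x ^+ j.
Proof. by move=> MN; rewrite /pgf (big_cat_nat _ (n := M.+1)). Qed.

Lemma pgf_mono M N x : 0 <= x -> (M <= N)%N -> pgf M x <= pgf N x.
Proof.
by move=> x0 MN; rewrite (pgf_split _ MN) lerDl sumr_ge0 // => j _; rewrite mulr_ge0 ?exprn_ge0.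
Qed.

Lemma pgf_tail M N y : 0 <= y -> y <= xhi -> (M <= N)%N ->
  pgf N y <= pgf M y + q ^+ M.+1 / (1 - q).
Proof.
move=> y0 y1 MN; rewrite (pgf_split _ MN) lerD2l.
apply: le_trans (geo_sum_le _ _ q_ge0_lt1); apply: ler_sum => j _.
by rewrite exprMn ler_pM ?exprn_ge0 ?p_leK ?lerXn2r // nnegrE ltW ?xhi_gt0.
Qed.

Lemma pgf_lipschitz M x y : 0 <= x -> x <= y -> y <= 1 ->
  pgf M y - pgf M x <= (y - x) * pgf_slope M.
Proof.
move=> x0 xy y1; rewrite /pgf /pgf_slope -sumrB mulr_sumr; apply: ler_sum => j _.
by rewrite -mulrBr mulrCA ler_wpM2l // mulrC subrXX_le.
Qed.

Lemma pgf_slope_ge0 M : 0 <= pgf_slope M.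
Proof. by apply: sumr_ge0 => j _; rewrite mulr_ge0. Qed.

Lemma pgf_xlo_bound : exists2 B, B < 1 & forall M, pgf M xlo <= B.
Proof.
have x0 := xlo_gt0; have K2 := K_ge2; have Kx1 := Kxlo_lt1; have E := xloE.
have d0 : 0 < 1 - K * xlo by rewrite subr_gt0.
exists (K * xlo + (K - 1) * K * xlo ^+ 2 / (1 - K * xlo)).
  by rewrite -ltrBrDl ltr_pdivrMr //; nra.
move=> M; apply: le_trans (pgf_mono (ltW x0) (leqW (leqnSn M))) _.
rewrite /pgf big_nat_recl // big_nat_recl // p0 p1 mul0r add0r expr1 lerD2l.
have c0 : 0 <= (K - 1) * K * xlo ^+ 2 by rewrite !mulr_ge0 ?exprn_ge0 ?ltW //; lra.
apply: (@le_trans _ _ (\sum_(0 <= j < M.+1) (K - 1) * K * xlo ^+ 2 * (K * xlo) ^+ j)).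
  apply: ler_sum => j _.
  have -> : (K - 1) * K * xlo ^+ 2 * (K * xlo) ^+ j = (K - 1) * K ^+ j.+1 * xlo ^+ j.+2.
    by rewrite exprMn !exprS; ring.
  by apply: ler_wpM2r; [rewrite exprn_ge0 // ltW | exact: p_leK2].
rewrite -mulr_sumr ler_wpM2l //; have := @geo_sum_le _ (K * xlo) 0 M.+1.
by rewrite expr0 mul1r; apply; rewrite Kx1 mulr_ge0 // ltW.
Qed.

(* The closed form of \sum_j sandwich_bound k j * xhi ^+ j. *)
Definition Sbound : R := K * xhi ^+ 2 / ((1 - q) * (1 - K * xhi ^+ 2)).

Lemma Kxhi2_lt1 : K * xhi ^+ 2 < 1.
Proof. by rewrite expr2 mulrA; have := q_lt1; have := q_ge0; have := xhi_le1; nra. Qed.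

Lemma Sbound_ge0 : 0 <= Sbound.
Proof.
have := q_lt1; have := Kxhi2_lt1; have := K_ge2 => K2 h1 h2.
by rewrite divr_ge0 ?mulr_ge0 ?exprn_ge0 ?ltW ?xhi_gt0 //; lra.
Qed.

Lemma Sbound_fix : K * xhi ^+ 2 / (1 - q) + K * xhi ^+ 2 * Sbound = Sbound.
Proof.
have := q_lt1; have := Kxhi2_lt1 => h1 h2.
have n1 : 1 - q != 0 by apply/eqP; lra.
have n2 : 1 - K * xhi ^+ 2 != 0 by apply/eqP; lra.
by rewrite /Sbound; field; rewrite n1 n2.
Qed.

Lemma sandwich_gf_le N :
  \sum_(0 <= j < N.+1) (sandwich_bound k j)%:R * xhi ^+ j <= Sbound /\
  \sum_(0 <= j < N.+2) (sandwich_bound k j)%:R * xhi ^+ j <= Sbound.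
Proof.
have S0 := Sbound_ge0; have c0 : 0 <= K * xhi ^+ 2 by rewrite mulr_ge0 ?ler0n ?sqr_ge0.
have S01 j : (j < 2)%N -> sandwich_bound k j = 0%N.
  by case: j => [|[]] // _; rewrite /sandwich_bound big_geq.
elim: N => [|N [IH1 IH2]].
  by rewrite !big_nat_recl // !big_geq // !S01 // !mul0r !addr0.
split=> //; rewrite big_nat_recl // big_nat_recl // !S01 // !mul0r !add0r.
rewrite (eq_bigr (fun j => K * xhi ^+ 2 * q ^+ j +
    K * xhi ^+ 2 * ((sandwich_bound k j)%:R * xhi ^+ j))) => [|j _]; last first.
  by rewrite sandwich_bound_rec natrD natrM natrX exprMn !exprS; ring.
rewrite big_split /= -!mulr_sumr -[X in _ <= X]Sbound_fix lerD ?ler_wpM2l //.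
by have := @geo_sum_le _ q 0 N.+1 q_ge0_lt1; rewrite expr0 mul1r.
Qed.

Lemma pgf_xhi_ge N : \sum_(0 <= j < N.+1) q ^+ j - 1 - Sbound <= pgf N xhi.
Proof.
have x0 := ltW xhi_gt0; have [SN _] := sandwich_gf_le N.
have one : \sum_(0 <= j < N.+1) (j == 0%N)%:R * xhi ^+ j = 1 :> R.
  by rewrite big_nat_recl // big1 ?addr0 ?mul1r ?expr0 // => j _; rewrite mul0r.
apply: le_trans (lerB (lexx _) SN) _; rewrite -[X in _ - X - _]one -!sumrB.
apply: ler_sum => j _; rewrite exprMn -!mulrBl ler_wpM2r ?exprn_ge0 //.
by have := p_lower j; rewrite -(ler_nat R) !natrD natrX; lra.
Qed.

(* That is, 1 / (1 - q) - 1 - Sbound > 1: the lower bound of pgf_xhi_ge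
   eventually exceeds 1. *)
Lemma Sbound_lt : (2 + Sbound) * (1 - q) < 1.
Proof.
have K2 := K_ge2.
have n1 : K - 1 != 0 by apply/eqP; lra.
have n2 : 2 * K - 1 != 0 by apply/eqP; lra.
have n3 : 4 * K - 1 != 0 by apply/eqP; lra.
rewrite -subr_gt0.
have -> : 1 - (2 + Sbound) * (1 - q) =
    (2 * K ^+ 2 - 4 * K + 1) / ((2 * K - 1) * (K - 1) * (4 * K - 1)).
  rewrite /Sbound /xhi; field.
  by rewrite n1 n2 n3 /=; apply/eqP; nra.
by rewrite divr_gt0 ?mulr_gt0 //; nra.
Qed.

Lemma pgf_xhi_gt1 : exists N, 1 < pgf N xhi.
Proof.
have q1 := q_lt1; have S0 := Sbound_ge0; have Sl := Sbound_lt.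
have e0 : 0 < 1 - (2 + Sbound) * (1 - q) by lra.
have [N qN] := exprn_lt q_ge0_lt1 e0.
exists N; apply: lt_le_trans (pgf_xhi_ge N).
have := geo_sum_mul q (leq0n N.+1); rewrite expr0.
have : q ^+ N.+1 <= q ^+ N by rewrite exprS ler_piMl ?exprn_ge0 ?q_ge0 // ltW.
set s := \sum_(_ <= _ < _) _; nra.
Qed.

Local Open Scope classical_set_scope.

(* rho is the root of \sum_j p_j x^j = 1; taking it as a supremum avoids power
   series. *)
Definition below1 : set R := [set x | 0 <= x <= xhi /\ forall M, pgf M x <= 1].
Definition rho : R := sup below1.

Lemma below1_xlo : below1 xlo.
Proof.
have [B B1 hB] := pgf_xlo_bound.
split; first by rewrite (ltW xlo_gt0) (ltW xlo_lt_xhi).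
by move=> M; apply: le_trans (hB M) (ltW B1).
Qed.

Lemma below1_has_sup : has_sup below1.
Proof. by split; [exists xlo; exact: below1_xlo | exists xhi => x [/andP[]]]. Qed.

Lemma xlo_le_rho : xlo <= rho.
Proof. by apply: (sup_upper_bound below1_has_sup); exact: below1_xlo. Qed.

Lemma rho_le_xhi : rho <= xhi.
Proof. by apply: ge_sup; [exists xlo; exact: below1_xlo | move=> x [/andP[]]]. Qed.

Lemma rho_gt0 : 0 < rho.
Proof. exact: lt_le_trans xlo_gt0 xlo_le_rho. Qed.

Lemma rho_le1 : rho <= 1.
Proof. exact: le_trans rho_le_xhi xhi_le1. Qed.

Lemma pgf_rho_le1 M : pgf M rho <= 1.
Proof.
apply/ler_addgt0Pr => e e0; set L := pgf_slope M + 1.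
have L0 : 0 < L by rewrite ltr_wpDl ?pgf_slope_ge0.
have [x bx rx] := sup_adherent (divr_gt0 e0 L0) below1_has_sup.
have xr : x <= rho by apply: (sup_upper_bound below1_has_sup).
case: bx => /andP[x0 _] /(_ M) bxM.
have := pgf_lipschitz M x0 xr rho_le1.
have : (rho - x) * pgf_slope M <= (rho - x) * L.
  by apply: ler_wpM2l; rewrite ?subr_ge0 ?lerDl.
have : (rho - x) * L < e by rewrite -ltr_pdivlMr //; rewrite -/rho in rx; lra.
lra.
Qed.

Lemma rho_lt_xhi : rho < xhi.
Proof.
have [N hN] := pgf_xhi_gt1.
rewrite lt_neqAle rho_le_xhi andbT; apply/eqP => E.
by have := pgf_rho_le1 N; rewrite E; lra.
Qed.

Lemma pgf_rho_ge M : 1 - q ^+ M.+1 / (1 - q) <= pgf M rho.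
Proof.
apply/ler_addgt0Pr => e e0; set L := pgf_slope M + 1.
have L0 : 0 < L by rewrite ltr_wpDl ?pgf_slope_ge0.
have eL0 : 0 < e / L by rewrite divr_gt0.
set y := Num.min xhi (rho + e / L).
have ry : rho < y by rewrite lt_min rho_lt_xhi ltrDl.
have yx : y <= xhi by rewrite ge_min lexx.
have yr : y <= rho + e / L by rewrite ge_min lexx orbT.
have y0 : 0 <= y := ltW (lt_trans rho_gt0 ry).
have [N hN] : exists N, 1 < pgf N y.
  case: (pselect (exists N, 1 < pgf N y)) => // hno; exfalso.
  have : y <= rho.
    apply: (sup_upper_bound below1_has_sup); split; first by rewrite y0 yx.
    by move=> N; rewrite leNgt; apply/negP => hN; apply: hno; exists N.
  by rewrite leNgt ry.
have := pgf_tail y0 yx (leq_maxr N M); have := pgf_mono y0 (leq_maxl N M).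
have := pgf_lipschitz M (ltW rho_gt0) (ltW ry) (le_trans yx xhi_le1).
have : (y - rho) * pgf_slope M <= (y - rho) * L.
  by apply: ler_wpM2l; rewrite ?subr_ge0 ?(ltW ry) ?lerDl.
have : (y - rho) * L <= e by rewrite -ler_pdivlMr //; lra.
lra.
Qed.

Lemma xlo_lt_rho : xlo < rho.
Proof.
have [B B1 hB] := pgf_xlo_bound; have q1 := q_lt1.
have e0 : 0 < (1 - B) * (1 - q) by rewrite mulr_gt0 // subr_gt0.
have [N qN] := exprn_lt q_ge0_lt1 e0.
have tB : q ^+ N.+1 / (1 - q) < 1 - B.
  rewrite ltr_pdivrMr ?subr_gt0 //; apply: le_lt_trans qN.
  by rewrite exprS ler_piMl ?exprn_ge0 ?q_ge0 // ltW.
rewrite lt_neqAle xlo_le_rho andbT; apply/eqP => E.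
by have := pgf_rho_ge N; rewrite -E; have := hB N; lra.
Qed.

Lemma a_ge1 n : (1 <= a n)%N.
Proof.
elim: n => [|n IH]; first by rewrite a0.
rewrite a_rec // big_nat_recl // p1 subn1 /=.
by apply: leq_trans (leq_addr _ _); rewrite muln_gt0 (leq_trans _ k_ge2).
Qed.

Lemma pgf_rhoE n : pgf n rho = \sum_(1 <= j < n.+1) (p j)%:R * rho ^+ j.
Proof. by rewrite /pgf big_ltn // p0 mul0r add0r. Qed.

Lemma a_rho_rec n : (0 < n)%N -> (a n)%:R * rho ^+ n =
  \sum_(1 <= j < n.+1) (p j)%:R * rho ^+ j * ((a (n - j))%:R * rho ^+ (n - j)).
Proof.
move=> n0; rewrite a_rec // natr_sum mulr_suml; apply: eq_big_nat => j /andP[j1 jn].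
by rewrite natrM -{2}(subnKC (_ : j <= n)%N) ?exprD; [ring | rewrite -ltnS].
Qed.

Lemma a_rho_le1 n : (a n)%:R * rho ^+ n <= 1.
Proof.
apply: (renewal_le1 _ a_rho_rec) => [j||m].
- by rewrite mulr_ge0 ?exprn_ge0 // ltW ?rho_gt0.
- by rewrite a0 mul1r.
- by rewrite -pgf_rhoE pgf_rho_le1.
Qed.

Lemma tail_sum_le M n : q ^+ M < (1 - q) ^+ 2 / 2 ->
  \sum_(M.+1 <= m < n.+1) q ^+ m.+1 / (1 - q) <= 2^-1.
Proof.
move=> qM; have q1 := q_lt1; have q0 := q_ge0; have d0 : 0 < 1 - q by rewrite subr_gt0.
rewrite -mulr_suml ler_pdivrMr //.
have : \sum_(M.+1 <= m < n.+1) q ^+ m.+1 <= \sum_(M.+1 <= m < n.+1) q ^+ m.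
  by apply: ler_sum => m _; rewrite exprS ler_piMl ?exprn_ge0 // ltW.
have := geo_sum_le M.+1 n.+1 q_ge0_lt1; rewrite ler_pdivlMr //.
have : q ^+ M.+1 <= q ^+ M by rewrite exprS ler_piMl ?exprn_ge0 // ltW.
set A := \sum_(_ <= _ < _) q ^+ _.+1; set B := \sum_(_ <= _ < _) q ^+ _.
nra.
Qed.

Lemma a_rho_ge : exists2 c, 0 < c & forall n, c <= (a n)%:R * rho ^+ n.
Proof.
have d0 : 0 < 1 - q by rewrite subr_gt0 q_lt1.
have e0 : 0 < (1 - q) ^+ 2 / 2 by rewrite divr_gt0 ?exprn_gt0.
have [M qM] := exprn_lt q_ge0_lt1 e0.
have r0 := rho_gt0; have r1 := rho_le1.
have bnd n : rho ^+ M * (1 - \sum_(M.+1 <= m < n.+1) q ^+ m.+1 / (1 - q))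
    <= (a n)%:R * rho ^+ n.
  apply: (@renewal_ge _ (fun j => (p j)%:R * rho ^+ j) (fun n => (a n)%:R * rho ^+ n)
    _ a_rho_rec M.+1 (fun m => q ^+ m.+1 / (1 - q))) => // [j||m mM|m|m|m].
  - by rewrite mulr_ge0 ?ler0n // exprn_ge0 // ltW.
  - by rewrite exprn_ge0 // ltW.
  - apply: le_trans (ler_wiXn2l (ltW r0) r1 (mM : (m <= M)%N)) _.
    by apply: ler_peMl; [rewrite exprn_ge0 // ltW | rewrite ler1n a_ge1].
  - by rewrite divr_ge0 ?exprn_ge0 ?q_ge0 // ltW.
  - by rewrite -pgf_rhoE pgf_rho_ge.
  - by apply: le_trans (tail_sum_le _ qM) _; lra.
exists (rho ^+ M / 2) => [|n]; first by rewrite divr_gt0 ?exprn_gt0.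
apply: le_trans (bnd n); have := tail_sum_le n qM; have := exprn_gt0 M r0.
set E := \sum_(_ <= _ < _) _; nra.
Qed.

Lemma growth : exists alpha : R, [/\ 2 * K - 1 < alpha, alpha < 2 * K - 2^-1 &
  exists2 c, 0 < c & forall n, c * alpha ^+ n <= (a n)%:R <= alpha ^+ n].
Proof.
have r0 := rho_gt0; exists rho^-1; split.
- by rewrite -[2 * K - 1]invrK ltf_pV2 ?posrE ?xhi_gt0 // rho_lt_xhi.
- by rewrite -[2 * K - 2^-1]invrK ltf_pV2 ?posrE ?xlo_gt0 // xlo_lt_rho.
have [c c0 hc] := a_rho_ge; exists c => // n.
have rn0 : 0 <= rho^-1 ^+ n by rewrite exprn_ge0 // invr_ge0 ltW.
have -> : (a n)%:R = (a n)%:R * rho ^+ n * rho^-1 ^+ n.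
  by rewrite exprVn mulfK // expf_neq0 // lt0r_neq0.
apply/andP; split; first by apply: ler_wpM2r.
by rewrite -[X in _ <= X]mul1r; apply: ler_wpM2r => //; apply: a_rho_le1.
Qed.

End Growth.

Theorem theorem3 (R : realType) (k : nat) (hk : (2 <= k)%N) :
  exists alpha : R,
    (2 * k%:R - 1 < alpha) /\ (alpha < 2 * k%:R - 2^-1) /\
    exists c1 c2 : R, 0 < c1 /\ 0 < c2 /\
      exists N : nat, forall n : nat, (N <= n)%N ->
        c1 * alpha ^+ n <= (num_palstars k (2 * n))%:R /\
        (num_palstars k (2 * n))%:R <= c2 * alpha ^+ n.
Proof.
have p_upper := @nprime_upper 'I_k; have p_lower := @nprime_lower 'I_k.
rewrite card_ord in p_upper p_lower.
have [alpha [lo hi [c c0 bnd]]] := @growth R k (nprime 'I_k)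
  (fun n => num_palstars k n.*2) hk erefl (etrans (nprime1 _) (card_ord k)) p_upper p_lower
  (num_palstars0 k) (@num_palstars_rec k).
exists alpha; do 2!split=> //; exists c, 1; do 2!split=> //; exists 0%N => n _.
by rewrite mul1r mul2n; apply/andP; exact: bnd.
Qed.
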